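(* Let $M_\bullet=(M_n,\mathrm{tr}_n,e_{n+1})_{n\ge0}$ be a Markov tower of modulus $d$, and for $n\ge1$ let $E_{n+1}:M_{n+1}\to M_n$ be the trace-preserving conditional expectation. Then for all $n\ge1$: (1) the map $M_n\ni y\mapsto ye_n\in M_{n+1}$ is injective; (2) for all $x\in M_{n+1}$, $d^2E_{n+1}(xe_n)$ is the unique $y\in M_n$ with $xe_n=ye_n$; (3) $\mathrm{tr}_{n+1}(xe_n)=d^{-2}\mathrm{tr}_n(x)$ for all $x\in M_n$; (4) $e_nM_{n+1}e_n=M_{n-1}e_n$; (5) $X_{n+1}:=M_ne_nM_n$ (linear span) is a two-sided ideal of $M_{n+1}$, so $M_{n+1}=X_{n+1}\oplus Y_{n+1}$ as von Neumann algebras (set $X_0=X_1=(0)$, $Y_0=M_0$, $Y_1=M_1$); (6) $ae_nb\mapsto ap_nb$ defines a $*$-isomorphism from $X_{n+1}$ onto the Jones basic construction $\langle M_n,p_n\rangle=M_np_nM_n$ of $M_{n-1}\subset(M_n,\mathrm{tr}_n)$ acting on $L^2(M_n,\mathrm{tr}_n)$, where $p_n$ is the Jones projection; (7) under this isomorphism, the canonical trace $\mathrm{Tr}_{n+1}$ on $M_np_nM_n$ (with $\mathrm{Tr}_{n+1}(ap_nb)=\mathrm{tr}_n(ab)$) equals $d^2\mathrm{tr}_{n+1}|_{X_{n+1}}$; (8) if $y\in Y_{n+1}$ and $x\in X_n$ then $yx=0$ in $M_{n+1}$; hence $E_{n+1}(Y_{n+1})\subseteq Y_n$; (9) if $Y_n=(0)$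 then $Y_k=(0)$ for all $k\ge n$.
   Context: A Markov tower $M_\bullet=(M_n,\mathrm{tr}_n,e_{n+1})_{n\ge0}$ is a sequence of finite-dimensional von Neumann algebras with unital inclusions $M_n\subset M_{n+1}$, faithful tracial states with $\mathrm{tr}_{n+1}|_{M_n}=\mathrm{tr}_n$, and projections $e_n\in M_{n+1}$ ($n\ge1$) such that: (M1) $e_i=e_i^2=e_i^*$, $e_ie_j=e_je_i$ for $|i-j|>1$, and $e_ie_{i\pm1}e_i=d^{-2}e_i$ for a fixed $d>0$ (the modulus); (M2) $e_nxe_n=E_n(x)e_n$ for $x\in M_n$, where $E_n:M_n\to M_{n-1}$ is the trace-preserving conditional expectation; (M3) $E_{n+1}(e_n)=d^{-2}$; (M4) $M_{n+1}e_n=M_ne_n$. It is connected if $\dim M_0=1$. *)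

From HB Require Import structures.
From mathcomp Require Import all_boot all_order all_algebra.
Set Implicit Arguments. Unset Strict Implicit. Unset Printing Implicit Defensive.
Import Order.TTheory GRing.Theory Num.Theory.
Local Open Scope ring_scope.

(* The scalar field is an arbitrary numClosedFieldType C (the
   complex numbers are the intended instance; C = R[i] with R real closed).
   The whole tower lives inside one ambient C-algebra A (e.g. its inductive
   limit): M n : A -> Prop is the subset M_n, the inclusions M_n ⊂ M_(n+1)
   are set inclusions, all M_n share the unit of A (unital inclusions), and
   the traces tr_n are the restrictions of a single map tr : A -> C
   (so tr_(n+1)|M_n = tr_n automatically). *)

Section Defs.
Variables (C : numClosedFieldType) (A : algType C).

Record is_star_alg (star : A -> A) : Prop := {
  star_add : forall x y, star (x + y) = star x + star y;
  star_scale : forall (c : C) x, star (c *: x) = c^* *: star x;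
  star_mul : forall x y, star (x * y) = star y * star x;
  star_invol : forall x, star (star x) = x }.

Definition fin_dim (S : A -> Prop) : Prop :=
  exists s : seq A, (forall i, (i < size s)%N -> S s`_i) /\
    forall x, S x -> exists c : nat -> C, x = \sum_(i < size s) c i *: s`_i.

(* unital finite-dimensional *-subalgebra of A; together with a faithful
   positive trace this is exactly a finite-dimensional von Neumann algebra *)
Record fd_star_subalg (star : A -> A) (S : A -> Prop) : Prop := {
  sa_one : S 1;
  sa_add : forall x y, S x -> S y -> S (x + y);
  sa_scale : forall (c : C) x, S x -> S (c *: x);
  sa_mul : forall x y, S x -> S y -> S (x * y);
  sa_star : forall x, S x -> S (star x);
  sa_fin : fin_dim S }.

Record faithful_tracial_state (star : A -> A) (tr : A -> C) (S : A -> Prop)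
  : Prop := {
  fts_lin : forall (c : C) x y, S x -> S y -> tr (c *: x + y) = c * tr x + tr y;
  fts_unit : tr 1 = 1;
  fts_trace : forall x y, S x -> S y -> tr (x * y) = tr (y * x);
  fts_pos : forall x, S x -> 0 <= tr (star x * x);
  fts_faithful : forall x, S x -> tr (star x * x) = 0 -> x = 0 }.

Record cond_exp (star : A -> A) (tr : A -> C) (N Mn : A -> Prop) (E : A -> A)
  : Prop := {
  ce_range : forall x, Mn x -> N (E x);
  ce_id : forall y, N y -> E y = y;
  ce_lin : forall (c : C) x y, Mn x -> Mn y -> E (c *: x + y) = c *: E x + E y;
  ce_bimod : forall a b x, N a -> N b -> Mn x -> E (a * x * b) = a * E x * b;
  ce_pos : forall z, Mn z -> exists w, N w /\ E (star z * z) = star w * w;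
  ce_tr : forall x, Mn x -> tr (E x) = tr x }.

Record markov_tower (star : A -> A) (tr : A -> C) (M : nat -> A -> Prop)
    (e : nat -> A) (E : nat -> A -> A) (d : C) : Prop := {
  mt_star : is_star_alg star;
  mt_alg : forall n, fd_star_subalg star (M n);
  mt_incl : forall n x, M n x -> M n.+1 x;
  mt_tr : forall n, faithful_tracial_state star tr (M n);
  mt_d : 0 < d;
  mt_E : forall n, (0 < n)%N -> cond_exp star tr (M n.-1) (M n) (E n);
  mt_e_in : forall n, (0 < n)%N -> M n.+1 (e n);
  mt_e_idem : forall n, (0 < n)%N -> e n * e n = e n;
  mt_e_sa : forall n, (0 < n)%N -> star (e n) = e n;
  mt_e_comm : forall i j, (0 < i)%N -> (i.+1 < j)%N -> e i * e j = e j * e i;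
  mt_e_TL1 : forall i, (0 < i)%N -> e i * e i.+1 * e i = d ^- 2 *: e i;
  mt_e_TL2 : forall i, (0 < i)%N -> e i.+1 * e i * e i.+1 = d ^- 2 *: e i.+1;
  mt_M2 : forall n x, (0 < n)%N -> M n x -> e n * x * e n = E n x * e n;
  mt_M3 : forall n, (0 < n)%N -> E n.+1 (e n) = d ^- 2 *: 1;
  mt_M4 : forall n z, (0 < n)%N ->
    ((exists x, M n.+1 x /\ z = x * e n) <-> (exists y, M n y /\ z = y * e n)) }.

Definition pairs_in (S : A -> Prop) (s : seq (A * A)) : Prop :=
  forall ab, ab \in s -> S ab.1 /\ S ab.2.

Definition Xsp (M : nat -> A -> Prop) (e : nat -> A) (n : nat) (x : A) : Prop :=
  match n with
  | m.+2 => exists s : seq (A * A), pairs_in (M m.+1) s /\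
                x = \sum_(ab <- s) ab.1 * e m.+1 * ab.2
  | _ => x = 0
  end.

(* Y_n = the complementary ideal of X_n in M_n, i.e. its annihilator;
   in particular Y_0 = M_0 and Y_1 = M_1. *)
Definition Ysp (M : nat -> A -> Prop) (e : nat -> A) (n : nat) (y : A) : Prop :=
  M n y /\ forall x, Xsp M e n x -> y * x = 0.

(* inner product of L^2(M_n, tr_n): <x, y> = tr(y^* x) *)
Definition ip (star : A -> A) (tr : A -> C) (x y : A) : C := tr (star y * x).

(* p is the Jones projection: the orthogonal projection of L^2(M_n,tr_n)
   onto L^2(M_(n-1),tr_(n-1)) (operators on L^2(M_n) are represented by
   maps A -> A, considered on M_n) *)
Definition jones_proj (star : A -> A) (tr : A -> C) (M : nat -> A -> Prop)
    (n : nat) (p : A -> A) : Prop :=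
  forall xi, M n xi -> M n.-1 (p xi) /\
    forall eta, M n.-1 eta -> ip star tr (xi - p xi) eta = 0.

Definition opeq (S : A -> Prop) (T U : A -> A) : Prop :=
  forall xi, S xi -> T xi = U xi.

Definition op_of (p : A -> A) (s : seq (A * A)) : A -> A :=
  fun xi => \sum_(ab <- s) ab.1 * p (ab.2 * xi).

End Defs.

From HB Require Import structures.
From mathcomp Require Import all_boot all_order all_algebra.
Import Order.TTheory GRing.Theory Num.Theory.
Local Open Scope ring_scope.
Set Implicit Arguments. Unset Strict Implicit. Unset Printing Implicit Defensive.

(* Everything rests on the pushdown lemma: by (M3) and (M4), every x e_n with
   x in M_(n+1) equals y e_n for y = d^2 E_(n+1)(x e_n) in M_n, and y is unique
   because E_(n+1)(y^* y e_n) = d^-2 y^* y and the trace is faithful.  Pushdown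
   makes X_(n+1) = M_n e_n M_n a *-ideal of M_(n+1); in finite dimension the
   nondegenerate pairing (x, y) |-> tr(xy) on X_(n+1) represents tr by some z,
   which is then a unit of X_(n+1), i.e. a central projection splitting
   M_(n+1) = X_(n+1) (+) Y_(n+1).  Letting x act on xi in L^2(M_n) by the
   pushdown of x xi e_n realises X_(n+1) as M_n p_n M_n, because the Jones
   projection p_n is E_n.  Finally e_(n-1) = d^2 e_(n-1) e_n e_(n-1) puts X_n
   inside X_(n+1), so Y_(n+1) kills X_n, and Y_(n+1) = 0 follows from Y_n = 0
   since E_(n+1)(y^* y) lies in Y_n. *)

Lemma submx_of_kernel (F : fieldType) (k : nat) (t : 'rV[F]_k) (G : 'M[F]_k) :
  (forall V : 'M_k, G *m V = 0 -> t *m V = 0) -> (t <= G)%MS.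
Proof. by move=> GV_tV; rewrite submxE; apply/eqP/GV_tV/mulmx_coker. Qed.

Section SpanOf.
Variables (R : pzRingType) (V : lmodType R) (u : seq V).

Definition span_of x := exists c : 'I_(size u) -> R, x = \sum_(i < size u) c i *: u`_i.

Lemma span_of0 : span_of 0.
Proof. by exists (fun _ => 0); rewrite big1 // => i _; rewrite scale0r. Qed.

Lemma span_ofD x y : span_of x -> span_of y -> span_of (x + y).
Proof.
move=> [c1 ->] [c2 ->]; exists (fun i => c1 i + c2 i); rewrite -big_split /=.
by apply: eq_bigr => i _; rewrite scalerDl.
Qed.

Lemma span_ofZ c x : span_of x -> span_of (c *: x).
Proof.
move=> [c' ->]; exists (fun i => c * c' i); rewrite scaler_sumr.
by apply: eq_bigr => i _; rewrite scalerA.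
Qed.

Lemma span_of_sum (I : Type) (r : seq I) (F : I -> V) :
  (forall i, span_of (F i)) -> span_of (\sum_(i <- r) F i).
Proof. by move=> spanF; apply: big_ind => //; [apply: span_of0 | apply: span_ofD]. Qed.

Lemma mem_span_of x : x \in u -> span_of x.
Proof.
move=> xu; pose j : 'I_(size u) := Ordinal (etrans (index_mem x u) xu).
exists (fun i => (i == j)%:R); rewrite (bigD1 j) //= eqxx scale1r nth_index //.
by rewrite big1 ?addr0 // => i /negbTE ->; rewrite scale0r.
Qed.
End SpanOf.

Section MarkovTower.
Variables (C : numClosedFieldType) (A : algType C)
    (star : A -> A) (tr : A -> C) (M : nat -> A -> Prop) (e : nat -> A)
    (E : nat -> A -> A) (d : C).
Hypothesis tower : markov_tower star tr M e E d.

Lemma mem_M1 k : M k 1. Proof. exact: (sa_one (mt_alg tower k)). Qed.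
Lemma mem_MD k x y : M k x -> M k y -> M k (x + y).
Proof. exact: (sa_add (mt_alg tower k)). Qed.
Lemma mem_MZ k c x : M k x -> M k (c *: x).
Proof. exact: (sa_scale (mt_alg tower k)). Qed.
Lemma mem_MM k x y : M k x -> M k y -> M k (x * y).
Proof. exact: (sa_mul (mt_alg tower k)). Qed.
Lemma mem_Mstar k x : M k x -> M k (star x).
Proof. exact: (sa_star (mt_alg tower k)). Qed.
Lemma mem_M0 k : M k 0.
Proof. by rewrite -(scale0r 1); apply/mem_MZ/mem_M1. Qed.
Lemma mem_MB k x y : M k x -> M k y -> M k (x - y).
Proof. by move=> Mx My; rewrite -scaleN1r; apply/mem_MD/mem_MZ. Qed.
Lemma mem_M_sum k (I : Type) (r : seq I) (P : pred I) (F : I -> A) :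
  (forall i, P i -> M k (F i)) -> M k (\sum_(i <- r | P i) F i).
Proof. by move=> MF; apply: big_ind => //; [apply: mem_M0 | apply: mem_MD]. Qed.
Lemma mem_MS k x : M k x -> M k.+1 x. Proof. exact: (mt_incl tower (n:=k)). Qed.
Lemma mem_Mpred k x : M k.-1 x -> M k x.
Proof. by case: k => // k; apply: mem_MS. Qed.

Lemma trace0 : tr 0 = 0.
Proof.
have := fts_lin (mt_tr tower 0) 1 (mem_M0 0) (mem_M0 0).
by rewrite scale1r addr0 mul1r => /eqP; rewrite addrC -subr_eq subrr eq_sym => /eqP.
Qed.
Lemma traceZ k c x : M k x -> tr (c *: x) = c * tr x.
Proof.
by move=> Mx; have := fts_lin (mt_tr tower k) c Mx (mem_M0 k); rewrite !addr0 trace0 addr0.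
Qed.
Lemma traceD k x y : M k x -> M k y -> tr (x + y) = tr x + tr y.
Proof. by move=> Mx My; have := fts_lin (mt_tr tower k) 1 Mx My; rewrite scale1r mul1r. Qed.
Lemma traceB k x y : M k x -> M k y -> tr (x - y) = tr x - tr y.
Proof.
by move=> Mx My; rewrite -scaleN1r (traceD Mx (mem_MZ _ My)) (traceZ _ My) mulN1r.
Qed.
Lemma traceC k x y : M k x -> M k y -> tr (x * y) = tr (y * x).
Proof. exact: (fts_trace (mt_tr tower k)). Qed.
Lemma trace_faithful k x : M k x -> tr (star x * x) = 0 -> x = 0.
Proof. exact: (fts_faithful (mt_tr tower k)). Qed.
Lemma trace_sum k (I : eqType) (r : seq I) (F : I -> A) :
  (forall i, i \in r -> M k (F i)) -> tr (\sum_(i <- r) F i) = \sum_(i <- r) tr (F i).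
Proof.
elim: r => [|i r IH] MF; first by rewrite !big_nil trace0.
have MFr j : j \in r -> M k (F j) by move=> jr; apply: MF; rewrite inE jr orbT.
rewrite !big_cons (traceD (MF i (mem_head _ _))) ?IH // big_seq.
exact: mem_M_sum.
Qed.
Lemma trace_lincomb k m (c : 'I_m -> C) (F : 'I_m -> A) :
  (forall i, M k (F i)) -> tr (\sum_i c i *: F i) = \sum_i c i * tr (F i).
Proof.
move=> MF; rewrite (trace_sum (k := k)) => [|i _]; last exact: mem_MZ.
by apply: eq_bigr => i _; rewrite (traceZ _ (MF i)).
Qed.
Lemma trace_lincomb_mull k m (c : 'I_m -> C) (F : 'I_m -> A) w :
  (forall i, M k (F i)) -> M k w ->
  tr ((\sum_i c i *: F i) * w) = \sum_i c i * tr (F i * w).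
Proof.
move=> MF Mw; rewrite mulr_suml (eq_bigr (fun i => c i *: (F i * w))) => [|i _].
  by rewrite (trace_lincomb (k := k)) // => i; apply: mem_MM.
by rewrite scalerAl.
Qed.
Lemma trace_lincomb_mulr k m (c : 'I_m -> C) (F : 'I_m -> A) w :
  (forall i, M k (F i)) -> M k w ->
  tr (w * \sum_i c i *: F i) = \sum_i c i * tr (w * F i).
Proof.
move=> MF Mw; rewrite mulr_sumr (eq_bigr (fun i => c i *: (w * F i))) => [|i _].
  by rewrite (trace_lincomb (k := k)) // => i; apply: mem_MM.
by rewrite scalerAr.
Qed.

Lemma star0 : star 0 = 0.
Proof. by rewrite -(scale0r 0) (star_scale (mt_star tower)) conjC0 !scale0r. Qed.
Lemma starD x y : star (x + y) = star x + star y. Proof. exact: (star_add (mt_star tower)). Qed.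
Lemma starM x y : star (x * y) = star y * star x. Proof. exact: (star_mul (mt_star tower)). Qed.
Lemma starK x : star (star x) = x. Proof. exact: (star_invol (mt_star tower)). Qed.

Section ConditionalExpectation.
Variable k : nat.
Hypothesis k_gt0 : (0 < k)%N.

Lemma E_lin c x y : M k x -> M k y -> E k (c *: x + y) = c *: E k x + E k y.
Proof. exact: (ce_lin (mt_E tower k_gt0)). Qed.
Lemma E_id y : M k.-1 y -> E k y = y. Proof. exact: (ce_id (mt_E tower k_gt0)). Qed.
Lemma E_range x : M k x -> M k.-1 (E k x). Proof. exact: (ce_range (mt_E tower k_gt0)). Qed.
Lemma E_trace x : M k x -> tr (E k x) = tr x. Proof. exact: (ce_tr (mt_E tower k_gt0)). Qed.
Lemma E0 : E k 0 = 0. Proof. exact/E_id/mem_M0. Qed.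
Lemma E_mull a x : M k.-1 a -> M k x -> E k (a * x) = a * E k x.
Proof.
by move=> Ma Mx; have := ce_bimod (mt_E tower k_gt0) Ma (mem_M1 _) Mx; rewrite !mulr1.
Qed.
Lemma E_mulr b x : M k.-1 b -> M k x -> E k (x * b) = E k x * b.
Proof.
by move=> Mb Mx; have := ce_bimod (mt_E tower k_gt0) (mem_M1 _) Mb Mx; rewrite !mul1r.
Qed.
End ConditionalExpectation.

Lemma d2_neq0 : d ^+ 2 != 0. Proof. exact/expf_neq0/lt0r_neq0/(mt_d tower). Qed.
Lemma scale_d2K (y : A) : d ^+ 2 *: (d ^- 2 *: y) = y.
Proof. by rewrite scalerA mulfV ?scale1r // d2_neq0. Qed.
Lemma mul_d2K (c : C) : d ^+ 2 * (d ^- 2 * c) = c.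
Proof. by rewrite mulrA mulfV ?mul1r // d2_neq0. Qed.

Definition pushdown n x := d ^+ 2 *: E n.+1 (x * e n).

Section Pushdown.
Variable n : nat.
Hypothesis n_gt0 : (0 < n)%N.
Let Sn_gt0 : (0 < n.+1)%N := ltn0Sn n.

Lemma mem_e : M n.+1 (e n). Proof. exact: (mt_e_in tower n_gt0). Qed.
Lemma star_e : star (e n) = e n. Proof. exact: (mt_e_sa tower n_gt0). Qed.

Lemma E_mul_e y : M n y -> E n.+1 (y * e n) = d ^- 2 *: y.
Proof. by move=> My; rewrite (E_mull Sn_gt0 My mem_e) (mt_M3 tower n_gt0) -scalerAr mulr1. Qed.

Lemma pushdownP x : M n.+1 x -> M n (pushdown n x) /\ x * e n = pushdown n x * e n.
Proof.
move=> Mx; rewrite /pushdown.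
have [/(_ (ex_intro _ x (conj Mx erefl))) [y [My ->]] _] := mt_M4 tower (x * e n) n_gt0.
by rewrite E_mul_e // scale_d2K.
Qed.

Lemma mul_e_inj y1 y2 : M n y1 -> M n y2 -> y1 * e n = y2 * e n -> y1 = y2.
Proof.
move=> My1 My2 eq_ye; apply/eqP; rewrite -subr_eq0; apply/eqP.
have My := mem_MB My1 My2; set y := y1 - y2 in My *.
have ye0 : y * e n = 0 by rewrite mulrBl eq_ye subrr.
have : E n.+1 (star y * y * e n) = 0 by rewrite -mulrA ye0 mulr0 E0.
rewrite E_mul_e; last exact: mem_MM (mem_Mstar My) My.
move/eqP; rewrite scaler_eq0 invr_eq0 (negbTE d2_neq0) /= => /eqP yy0.
by apply: (trace_faithful My); rewrite yy0 trace0.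
Qed.

Lemma pushdown_unique x y : M n.+1 x -> M n y -> x * e n = y * e n -> y = pushdown n x.
Proof.
move=> Mx My eq_xy; have [Mp eq_p] := pushdownP Mx.
by apply: mul_e_inj; rewrite // -eq_xy.
Qed.

Lemma trace_mul_e x : M n x -> tr (x * e n) = d ^- 2 * tr x.
Proof.
move=> Mx; rewrite -(E_trace Sn_gt0 (mem_MM (mem_MS Mx) mem_e)) E_mul_e //.
exact: traceZ Mx.
Qed.

Lemma e_mul_e x : M n x -> e n * x * e n = E n x * e n.
Proof. exact: (mt_M2 tower n_gt0). Qed.

Lemma e_M_e z : (exists x, M n.+1 x /\ z = e n * x * e n) <->
                (exists y, M n.-1 y /\ z = y * e n).
Proof.
split=> [[x [Mx ->]] | [y [My ->]]].
  have [Mp eq_p] := pushdownP Mx.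
  exists (E n (pushdown n x)); split; first exact: E_range.
  by rewrite -mulrA eq_p mulrA e_mul_e.
exists y; split; first exact/mem_MS/mem_Mpred.
by rewrite e_mul_e ?E_id //; apply: mem_Mpred.
Qed.

(* w = p y - E_n y lies in M_(n-1), so it is orthogonal to y - p y by definition of p,
   and to y - E_n y because E_n is trace preserving; hence tr(w^* w) = 0. *)
Lemma jones_proj_E p y : jones_proj star tr M n p -> M n y -> p y = E n y.
Proof.
move=> jp My; have [Mp orth] := jp y My.
have ME := E_range n_gt0 My.
have Mw := mem_MB Mp ME; set w := p y - E n y in Mw *.
have Mw' := mem_Mstar (mem_Mpred Mw).
have orth_E : tr (star w * (y - E n y)) = 0.
  rewrite mulrBr (traceB (mem_MM Mw' My) (mem_MM Mw' (mem_Mpred ME))).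
  by rewrite -(E_mull n_gt0 (mem_Mstar Mw) My) (E_trace n_gt0 (mem_MM Mw' My)) subrr.
have ww : star w * w = star w * (y - E n y) - star w * (y - p y).
  by rewrite -mulrBr opprB addrC addrA subrK.
apply/eqP; rewrite -subr_eq0; apply/eqP/(trace_faithful (mem_Mpred Mw)).
rewrite ww (traceB (mem_MM Mw' (mem_MB My (mem_Mpred ME)))
                   (mem_MM Mw' (mem_MB My (mem_Mpred Mp)))).
by rewrite orth_E; have := orth w Mw; rewrite /ip => ->; rewrite subrr.
Qed.

Definition X x := exists s : seq (A * A), pairs_in (M n) s /\
   x = \sum_(ab <- s) ab.1 * e n * ab.2.

Lemma XspE x : Xsp M e n.+1 x <-> X x.
Proof. by rewrite /X /Xsp -(prednK n_gt0). Qed.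

Lemma X_ind (P : A -> Prop) : P 0 -> (forall x y, P x -> P y -> P (x + y)) ->
  (forall a b, M n a -> M n b -> P (a * e n * b)) -> forall x, X x -> P x.
Proof.
move=> P0 PD Paeb x [s [Ms ->]]; elim: s Ms => [|ab s IH] Ms; first by rewrite big_nil.
rewrite big_cons; apply: PD; last by apply: IH => u us; apply: Ms; rewrite inE us orbT.
by have [Ma Mb] := Ms ab (mem_head _ _); apply: Paeb.
Qed.

Lemma pairs_in1 a b : M n a -> M n b -> pairs_in (M n) [:: (a, b)].
Proof. by move=> Ma Mb u; rewrite inE => /eqP ->. Qed.

Lemma X0 : X 0. Proof. by exists [::]; rewrite big_nil. Qed.
Lemma X_aeb a b : M n a -> M n b -> X (a * e n * b).
Proof. by move=> Ma Mb; exists [:: (a, b)]; rewrite big_seq1; split => //; apply: pairs_in1. Qed.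
Lemma XD x y : X x -> X y -> X (x + y).
Proof.
move=> [s [Ms ->]] [t [Mt ->]]; exists (s ++ t); rewrite big_cat; split=> // u.
by rewrite mem_cat => /orP [] ?; [apply: Ms | apply: Mt].
Qed.
Lemma XZ c x : X x -> X (c *: x).
Proof.
move=> [s [Ms ->]]; exists [seq (c *: ab.1, ab.2) | ab <- s]; split.
  by move=> u /mapP [ab /Ms [Ma Mb] ->]; split=> //; apply: mem_MZ.
by rewrite big_map scaler_sumr; apply: eq_bigr => ab _; rewrite -!scalerAl.
Qed.
Lemma XB x y : X x -> X y -> X (x - y).
Proof. by move=> Xx Xy; rewrite -scaleN1r; apply/XD/XZ. Qed.
Lemma X_sum (I : Type) (r : seq I) (F : I -> A) :
  (forall i, X (F i)) -> X (\sum_(i <- r) F i).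
Proof. by move=> XF; apply: big_ind => //; [apply: X0 | apply: XD]. Qed.

Lemma X_sub_M x : X x -> M n.+1 x.
Proof.
move: x; apply: X_ind; [exact: mem_M0 | exact: mem_MD | move=> a b Ma Mb].
by apply: mem_MM; [apply: mem_MM |]; [apply: mem_MS | apply: mem_e | apply: mem_MS].
Qed.

Lemma X_mull m x : M n.+1 m -> X x -> X (m * x).
Proof.
move=> Mm; move: x; apply: (X_ind (P := fun x => X (m * x))) => [|x1 x2 X1 X2|a b Ma Mb].
- by rewrite mulr0; apply: X0.
- by rewrite mulrDr; apply: XD.
have [Mp eq_p] := pushdownP (mem_MM Mm (mem_MS Ma)).
by rewrite !mulrA eq_p; apply: X_aeb.
Qed.

Lemma X_star x : X x -> X (star x).
Proof.
move: x; apply: (X_ind (P := fun x => X (star x))) => [|x1 x2 X1 X2|a b Ma Mb].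
- by rewrite star0; apply: X0.
- by rewrite starD; apply: XD.
by rewrite !starM star_e mulrA; apply: X_aeb; apply: mem_Mstar.
Qed.

Lemma X_mulr m x : M n.+1 m -> X x -> X (x * m).
Proof.
move=> Mm Xx; rewrite -[x * m]starK starM.
by apply/X_star/X_mull; [apply: mem_Mstar | apply: X_star].
Qed.

Lemma X_nondegenerate x : X x -> (forall y, X y -> tr (y * x) = 0) -> x = 0.
Proof. by move=> Xx tr0; apply: (trace_faithful (X_sub_M Xx)); apply/tr0/X_star. Qed.

Lemma X_finite_span : exists u, (forall x, x \in u -> X x) /\ forall x, X x -> span_of u x.
Proof.
have [s [Ms_nth span_s]] := sa_fin (mt_alg tower n).
have Ms a : a \in s -> M n a by move=> /(nthP 0) [i lt_is <-]; apply: Ms_nth.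
pose u := [seq a * e n * b | a <- s, b <- s]; exists u; split.
  by move=> x /allpairsP [[a b] [/= /Ms Ma /Ms Mb ->]]; apply: X_aeb.
apply: X_ind => [|x y|a b /span_s [ca ->] /span_s [cb ->]]; [exact: span_of0 | exact: span_ofD |].
rewrite !mulr_suml; apply: span_of_sum => i; rewrite mulr_sumr; apply: span_of_sum => j.
rewrite -!scalerAl -scalerAr; apply/span_ofZ/span_ofZ/mem_span_of/allpairs_f; exact: mem_nth.
Qed.

(* Riesz representation of tr for the nondegenerate pairing (x, y) |-> tr(xy) on
   X_(n+1): tr lies in the row space of the Gram matrix of a spanning family. *)
Lemma X_trace_rep : exists z, X z /\ forall x, X x -> tr (z * x) = tr x.
Proof.
have [u [uX Xu]] := X_finite_span; pose k := size u.
have Mu (i : 'I_k) : M n.+1 u`_i by apply/X_sub_M/uX/mem_nth.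
have X_comb (c : 'I_k -> C) : X (\sum_i c i *: u`_i) by apply: X_sum => i; apply/XZ/uX/mem_nth.
pose G : 'M[C]_k := \matrix_(i, j) tr (u`_i * u`_j).
pose t : 'rV[C]_k := \row_j tr u`_j.
have /submxP [D tDG] : (t <= G)%MS.
  apply: submx_of_kernel => V GV0; apply/matrixP => i0 j; rewrite !mxE.
  pose v := \sum_i V i j *: u`_i; have Mv := X_sub_M (X_comb (V^~ j)).
  suff v0 : v = 0.
    rewrite -[RHS]trace0 -v0 -[v]mul1r (trace_lincomb_mulr _ Mu (mem_M1 _)).
    by apply: eq_bigr => i _; rewrite mxE mul1r mulrC.
  apply: X_nondegenerate => [|y /Xu [c ->]]; first exact: X_comb.
  rewrite (trace_lincomb_mull _ Mu Mv); apply: big1 => a _.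
  have := congr1 (fun W : 'M[C]_k => W a j) GV0.
  rewrite !mxE (trace_lincomb_mulr _ Mu (Mu a)) => GV_aj.
  rewrite (eq_bigr (fun i => G a i * V i j)) ?GV_aj ?mulr0 // => i _.
  by rewrite mxE mulrC.
exists (\sum_i D 0 i *: u`_i); split=> // x /Xu [c ->].
rewrite (trace_lincomb_mulr _ Mu (X_sub_M (X_comb _))).
rewrite -[X in _ = tr X]mul1r (trace_lincomb_mulr _ Mu (mem_M1 _)).
apply: eq_bigr => j _; have := congr1 (fun W : 'rV[C]_k => W 0 j) tDG; rewrite !mxE => tr_j.
rewrite mul1r (trace_lincomb_mull _ Mu (Mu j)) tr_j; congr (_ * _).
by apply: eq_bigr => i _; rewrite mxE.
Qed.

Lemma X_eq_trace x x' : X x -> X x' ->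
  (forall y, X y -> tr (y * x) = tr (y * x')) -> x = x'.
Proof.
move=> Xx Xx' eq_tr; apply/eqP; rewrite -subr_eq0; apply/eqP.
apply: X_nondegenerate; first exact: XB.
move=> y Xy.
have My := X_sub_M Xy; have Mx := X_sub_M Xx; have Mx' := X_sub_M Xx'.
by rewrite mulrBr (traceB (mem_MM My Mx) (mem_MM My Mx')) eq_tr // subrr.
Qed.

Lemma X_unit : exists z, X z /\ forall x, X x -> x * z = x /\ z * x = x.
Proof.
have [z [Xz tr_z]] := X_trace_rep; have Mz := X_sub_M Xz.
exists z; split=> // x Xx; have Mx := X_sub_M Xx.
split; apply: X_eq_trace => //; try by [apply: X_mulr | apply: X_mull].
  move=> y Xy; have My := X_sub_M Xy.
  by rewrite mulrA (traceC (mem_MM My Mx) Mz) tr_z //; apply: X_mulr.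
move=> y Xy; have My := X_sub_M Xy.
rewrite mulrA (traceC (mem_MM My Mz) Mx) mulrA (traceC (mem_MM Mx My) Mz).
by rewrite tr_z ?(traceC Mx My) //; apply: X_mulr.
Qed.
Lemma central_support : exists z, M n.+1 z /\ z * z = z /\ star z = z /\
  (forall m, M n.+1 m -> z * m = m * z) /\
  (forall x, Xsp M e n.+1 x <-> exists m, M n.+1 m /\ x = m * z) /\
  (forall y, Ysp M e n.+1 y <-> exists m, M n.+1 m /\ y = m * (1 - z)).
Proof.
have [z [Xz unit_z]] := X_unit; have Mz := X_sub_M Xz.
have zR x : X x -> x * z = x by move=> /unit_z [].
have zL x : X x -> z * x = x by move=> /unit_z [].
have star_z : star z = z.
  have := congr1 star (zR _ (X_star Xz)); rewrite starM !starK => zz.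
  by rewrite -[LHS](zR _ (X_star Xz)).
exists z; split=> //; split; first exact: zR.
split=> //.
split=> [m Mm | ].
  rewrite -[LHS]zR; last exact: X_mulr.
  by rewrite -mulrA zL //; apply: X_mull.
split=> [x | y]; split.
- by move=> /XspE Xx; exists x; rewrite zR //; split=> //; apply: X_sub_M.
- by move=> [m [Mm ->]]; apply/XspE/X_mull.
- move=> [My ann]; exists y; split=> //.
  by rewrite mulrBr mulr1 ann ?subr0 //; apply/XspE.
move=> [m [Mm ->]]; split; first exact: mem_MM Mm (mem_MB (mem_M1 _) Mz).
by move=> x /XspE Xx; rewrite -mulrA mulrBl mul1r zL // subrr mulr0.
Qed.

Lemma pushdown_lin c x y : M n.+1 x -> M n.+1 y ->
  pushdown n (c *: x + y) = c *: pushdown n x + pushdown n y.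
Proof.
move=> Mx My; rewrite /pushdown mulrDl -scalerAl.
rewrite (E_lin Sn_gt0 _ (mem_MM Mx mem_e) (mem_MM My mem_e)).
by rewrite scalerDr !scalerA mulrC.
Qed.

Lemma pushdown_mul_e x y : x * e n = y * e n -> pushdown n x = pushdown n y.
Proof. by rewrite /pushdown => ->. Qed.

Lemma trace_aeb a b : M n a -> M n b -> tr (a * e n * b) = d ^- 2 * tr (a * b).
Proof.
move=> Ma Mb; rewrite (traceC (mem_MM (mem_MS Ma) mem_e) (mem_MS Mb)) mulrA.
by rewrite (trace_mul_e (mem_MM Mb Ma)) (traceC Mb Ma).
Qed.

Definition basic_iso x xi := pushdown n (x * xi).

Lemma basic_isoP x xi : M n.+1 x -> M n xi ->
  M n (basic_iso x xi) /\ x * xi * e n = basic_iso x xi * e n.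
Proof. by move=> Mx Mxi; apply/pushdownP/mem_MM/mem_MS. Qed.

Lemma basic_iso_op p s xi : jones_proj star tr M n p -> pairs_in (M n) s -> M n xi ->
  basic_iso (\sum_(ab <- s) ab.1 * e n * ab.2) xi = op_of p s xi.
Proof.
move=> jp Ms Mxi; have Xs : X (\sum_(ab <- s) ab.1 * e n * ab.2) by exists s.
suff [Mop eq_op] : M n (op_of p s xi) /\
    (\sum_(ab <- s) ab.1 * e n * ab.2) * xi * e n = op_of p s xi * e n.
  have [Mphi eq_phi] := basic_isoP (X_sub_M Xs) Mxi.
  by apply/esym/mul_e_inj; rewrite // -eq_op.
rewrite /op_of; elim: s Ms {Xs} => [|ab s IH] Ms.
  by rewrite !big_nil !mul0r; split=> //; apply: mem_M0.
have [Ma Mb] := Ms ab (mem_head _ _); have Mbxi := mem_MM Mb Mxi.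
have [IH_M IH_eq] := IH (fun u us => Ms u (mem_behead (s := ab :: s) us)).
rewrite !big_cons (jones_proj_E jp Mbxi) !mulrDl IH_eq; split.
  apply: mem_MD IH_M; apply: mem_MM Ma _.
  exact/mem_Mpred/(E_range n_gt0).
by congr (_ + _); rewrite -[RHS]mulrA -(e_mul_e Mbxi) !mulrA.
Qed.

Lemma basic_isoM x y xi : M n.+1 x -> M n.+1 y -> M n xi ->
  basic_iso (x * y) xi = basic_iso x (basic_iso y xi).
Proof.
move=> Mx My Mxi; have [_ eq_y] := basic_isoP My Mxi.
apply: pushdown_mul_e.
have -> : x * y * xi * e n = x * (y * xi * e n) by rewrite !mulrA.
by rewrite eq_y mulrA.
Qed.

Lemma basic_iso_adjoint x xi eta : M n.+1 x -> M n xi -> M n eta ->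
  ip star tr (basic_iso (star x) xi) eta = ip star tr xi (basic_iso x eta).
Proof.
move=> Mx Mxi Meta; rewrite /ip.
have [Mphi eq_phi] := basic_isoP (mem_Mstar Mx) Mxi.
have [Mpsi eq_psi] := basic_isoP Mx Meta.
set phi := basic_iso _ xi in Mphi eq_phi *; set psi := basic_iso x eta in Mpsi eq_psi *.
have trace_e w : M n w -> tr w = d ^+ 2 * tr (w * e n).
  by move=> Mw; rewrite trace_mul_e // mul_d2K.
have e_psi : e n * star psi = e n * star eta * star x.
  by rewrite -star_e -starM -eq_psi !starM star_e mulrA.
rewrite (trace_e _ (mem_MM (mem_Mstar Meta) Mphi)).
rewrite (trace_e _ (mem_MM (mem_Mstar Mpsi) Mxi)); congr (_ * _).
rewrite -mulrA -eq_phi (traceC (mem_MS (mem_MM (mem_Mstar Mpsi) Mxi)) mem_e).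
rewrite [in RHS]mulrA e_psi -!mulrA (traceC mem_e) ?mulrA //.
exact: mem_MM (mem_MM (mem_MS (mem_Mstar Meta)) (mem_Mstar Mx)) (mem_MS Mxi).
Qed.

Lemma basic_iso_inj x : X x -> (forall xi, M n xi -> basic_iso x xi = 0) -> x = 0.
Proof.
move=> Xx phi0; have Mx := X_sub_M Xx.
have ann y : X y -> x * y = 0.
  move: y; apply: (X_ind (P := fun y => x * y = 0)) => [|y1 y2 x_y1 x_y2|a b Ma Mb] /=.
  - by rewrite mulr0.
  - by rewrite mulrDr x_y1 x_y2 addr0.
  by have [_ eq_a] := basic_isoP Mx Ma; rewrite !mulrA eq_a phi0 // !mul0r.
apply: (trace_faithful Mx); rewrite (traceC (mem_Mstar Mx) Mx) ann ?trace0 //.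
exact: X_star.
Qed.

Lemma basic_iso_lin c x y xi : M n.+1 x -> M n.+1 y -> M n xi ->
  basic_iso (c *: x + y) xi = c *: basic_iso x xi + basic_iso y xi.
Proof.
move=> Mx My Mxi; rewrite /basic_iso mulrDl -scalerAl pushdown_lin //.
  exact: mem_MM Mx (mem_MS Mxi).
exact: mem_MM My (mem_MS Mxi).
Qed.

Lemma basic_iso_trace p s x : jones_proj star tr M n p -> pairs_in (M n) s -> X x ->
  opeq (M n) (basic_iso x) (op_of p s) -> \sum_(ab <- s) tr (ab.1 * ab.2) = d ^+ 2 * tr x.
Proof.
move=> jp Ms Xx eq_op; pose x' := \sum_(ab <- s) ab.1 * e n * ab.2.
have Xx' : X x' by exists s.
have -> : x = x'.
  apply/eqP; rewrite -subr_eq0; apply/eqP/basic_iso_inj; first exact: XB.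
  move=> xi Mxi; rewrite addrC -scaleN1r (basic_iso_lin _ (X_sub_M Xx') (X_sub_M Xx) Mxi).
  by rewrite eq_op // (basic_iso_op jp Ms Mxi) scaleN1r addNr.
rewrite /x' (trace_sum (k := n.+1)) => [|ab /Ms [Ma Mb]]; last first.
  exact: mem_MM (mem_MM (mem_MS Ma) mem_e) (mem_MS Mb).
rewrite big_distrr /= big_seq [RHS]big_seq; apply: eq_bigr => ab /Ms [Ma Mb].
by rewrite trace_aeb // mul_d2K.
Qed.

Lemma basic_construction_iso p : jones_proj star tr M n p ->
  exists Phi : A -> A -> A,
    (forall a b, M n a -> M n b ->
       opeq (M n) (Phi (a * e n * b)) (fun xi => a * p (b * xi))) /\
    (forall x xi, Xsp M e n.+1 x -> M n xi -> M n (Phi x xi)) /\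
    (forall (c : C) x y, Xsp M e n.+1 x -> Xsp M e n.+1 y ->
       opeq (M n) (Phi (c *: x + y)) (fun xi => c *: Phi x xi + Phi y xi)) /\
    (forall x y, Xsp M e n.+1 x -> Xsp M e n.+1 y ->
       opeq (M n) (Phi (x * y)) (fun xi => Phi x (Phi y xi))) /\
    (forall x xi eta, Xsp M e n.+1 x -> M n xi -> M n eta ->
       ip star tr (Phi (star x) xi) eta = ip star tr xi (Phi x eta)) /\
    (forall x, Xsp M e n.+1 x -> opeq (M n) (Phi x) (fun _ => 0) -> x = 0) /\
    (forall x, Xsp M e n.+1 x ->
       exists s, pairs_in (M n) s /\ opeq (M n) (Phi x) (op_of p s)) /\
    (forall s, pairs_in (M n) s ->
       exists x, Xsp M e n.+1 x /\ opeq (M n) (Phi x) (op_of p s)) /\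
    (forall x s, Xsp M e n.+1 x -> pairs_in (M n) s ->
       opeq (M n) (Phi x) (op_of p s) ->
       \sum_(ab <- s) tr (ab.1 * ab.2) = d ^+ 2 * tr x).
Proof.
move=> jp; exists basic_iso; split.
  move=> a b Ma Mb xi Mxi; have := basic_iso_op jp (pairs_in1 Ma Mb) Mxi.
  by rewrite /op_of !big_seq1.
split; first by move=> x xi /XspE /X_sub_M Mx Mxi; case: (basic_isoP Mx Mxi).
split; first by move=> c x y /XspE /X_sub_M Mx /XspE /X_sub_M My xi; apply: basic_iso_lin.
split; first by move=> x y /XspE /X_sub_M Mx /XspE /X_sub_M My xi; apply: basic_isoM.
split; first by move=> x xi eta /XspE /X_sub_M; apply: basic_iso_adjoint.
split; first by move=> x /XspE; apply: basic_iso_inj.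
split; first by move=> x /XspE [s [Ms ->]]; exists s; split=> // xi; apply: basic_iso_op.
split.
  move=> s Ms; exists (\sum_(ab <- s) ab.1 * e n * ab.2).
  by split=> [|xi]; [apply/XspE; exists s | apply: basic_iso_op].
by move=> x s /XspE Xx Ms; apply: basic_iso_trace jp Ms Xx.
Qed.
End Pushdown.

Lemma Xsp_sub_M k x : Xsp M e k x -> M k x.
Proof.
case: k => [|[|m]] /=; try by move=> ->; apply: mem_M0.
exact: (X_sub_M (ltn0Sn m)).
Qed.

Lemma X_sub_succ n x : (0 < n)%N -> X n x -> X n.+1 x.
Proof.
move=> n_gt0; move: x; apply: X_ind => [|x y|a b Ma Mb]; [exact: X0 | exact: XD |].
have Mae : M n.+1 (a * e n) by apply: mem_MM (mem_MS Ma) (mem_e n_gt0).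
have Meb : M n.+1 (e n * b) by apply: mem_MM (mem_e n_gt0) (mem_MS Mb).
rewrite -[e n]scale_d2K -(mt_e_TL1 tower n_gt0) -scalerAr -scalerAl.
apply: XZ; rewrite (_ : a * _ * b = a * e n * e n.+1 * (e n * b)); last by rewrite !mulrA.
exact: X_aeb.
Qed.

Lemma Ysp_mul_Xsp n y x : (0 < n)%N -> Ysp M e n.+1 y -> Xsp M e n x -> y * x = 0.
Proof.
case: n => [//|[_ _ /= ->|m _ [_ ann]]]; first by rewrite mulr0.
by move=> /(XspE (ltn0Sn m)) /(X_sub_succ (ltn0Sn m)) /(XspE (ltn0Sn m.+1)); apply: ann.
Qed.

Lemma E_Ysp n y : (0 < n)%N -> Ysp M e n.+1 y -> Ysp M e n (E n.+1 y).
Proof.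
move=> n_gt0 Yy; have [My _] := Yy; split; first exact: (E_range (ltn0Sn n) My).
move=> x Xx; rewrite -(E_mulr (ltn0Sn n) (Xsp_sub_M Xx) My) (Ysp_mul_Xsp n_gt0 Yy Xx).
exact: E0.
Qed.

Lemma Ysp_eq0_succ n : (0 < n)%N -> (forall y, Ysp M e n y -> y = 0) ->
  forall y, Ysp M e n.+1 y -> y = 0.
Proof.
move=> n_gt0 Y0 y [My ann].
have Yyy : Ysp M e n.+1 (star y * y).
  split=> [|x Xx]; first exact: mem_MM (mem_Mstar My) My.
  by rewrite -mulrA ann ?mulr0.
apply: (trace_faithful My); rewrite -(E_trace (ltn0Sn n) (mem_MM (mem_Mstar My) My)).
by rewrite (Y0 _ (E_Ysp n_gt0 Yyy)) trace0.
Qed.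

Lemma Ysp_eq0_ge n : (0 < n)%N -> (forall y, Ysp M e n y -> y = 0) ->
  forall k, (n <= k)%N -> forall y, Ysp M e k y -> y = 0.
Proof.
move=> n_gt0 Y0 k le_nk; rewrite -(subnKC le_nk); elim: (k - n)%N => [|j IH].
  by rewrite addn0.
by rewrite addnS; apply: Ysp_eq0_succ IH; rewrite ltn_addr.
Qed.

End MarkovTower.

Theorem mainTheorem4 (C : numClosedFieldType) (A : algType C)
    (star : A -> A) (tr : A -> C) (M : nat -> A -> Prop) (e : nat -> A)
    (E : nat -> A -> A) (d : C) :
  markov_tower star tr M e E d ->
  forall n : nat, (0 < n)%N ->
  (forall y1 y2, M n y1 -> M n y2 -> y1 * e n = y2 * e n -> y1 = y2) /\
  (forall x, M n.+1 x ->
     M n (d ^+ 2 *: E n.+1 (x * e n)) /\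
     x * e n = (d ^+ 2 *: E n.+1 (x * e n)) * e n /\
     (forall y, M n y -> x * e n = y * e n -> y = d ^+ 2 *: E n.+1 (x * e n))) /\
  (forall x, M n x -> tr (x * e n) = d ^- 2 * tr x) /\
  (forall z, (exists x, M n.+1 x /\ z = e n * x * e n) <->
             (exists y, M n.-1 y /\ z = y * e n)) /\
  ((forall x, Xsp M e n.+1 x -> M n.+1 x) /\
   (forall x m, Xsp M e n.+1 x -> M n.+1 m ->
      Xsp M e n.+1 (m * x) /\ Xsp M e n.+1 (x * m)) /\
   (exists z, M n.+1 z /\ z * z = z /\ star z = z /\
      (forall m, M n.+1 m -> z * m = m * z) /\
      (forall x, Xsp M e n.+1 x <-> exists m, M n.+1 m /\ x = m * z) /\
      (forall y, Ysp M e n.+1 y <-> exists m, M n.+1 m /\ y = m * (1 - z)))) /\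
  (forall p, jones_proj star tr M n p ->
   exists Phi : A -> A -> A,
     (forall a b, M n a -> M n b ->
        opeq (M n) (Phi (a * e n * b)) (fun xi => a * p (b * xi))) /\
     (forall x xi, Xsp M e n.+1 x -> M n xi -> M n (Phi x xi)) /\
     (forall (c : C) x y, Xsp M e n.+1 x -> Xsp M e n.+1 y ->
        opeq (M n) (Phi (c *: x + y)) (fun xi => c *: Phi x xi + Phi y xi)) /\
     (forall x y, Xsp M e n.+1 x -> Xsp M e n.+1 y ->
        opeq (M n) (Phi (x * y)) (fun xi => Phi x (Phi y xi))) /\
     (forall x xi eta, Xsp M e n.+1 x -> M n xi -> M n eta ->
        ip star tr (Phi (star x) xi) eta = ip star tr xi (Phi x eta)) /\
     (forall x, Xsp M e n.+1 x -> opeq (M n) (Phi x) (fun _ => 0) -> x = 0) /\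
     (forall x, Xsp M e n.+1 x ->
        exists s, pairs_in (M n) s /\ opeq (M n) (Phi x) (op_of p s)) /\
     (forall s, pairs_in (M n) s ->
        exists x, Xsp M e n.+1 x /\ opeq (M n) (Phi x) (op_of p s)) /\
     (forall x s, Xsp M e n.+1 x -> pairs_in (M n) s ->
        opeq (M n) (Phi x) (op_of p s) ->
        \sum_(ab <- s) tr (ab.1 * ab.2) = d ^+ 2 * tr x)) /\
  (forall y x, Ysp M e n.+1 y -> Xsp M e n x -> y * x = 0) /\
  (forall y, Ysp M e n.+1 y -> Ysp M e n (E n.+1 y)) /\
  ((forall y, Ysp M e n y -> y = 0) ->
     forall k, (n <= k)%N -> forall y, Ysp M e k y -> y = 0).
Proof.
move=> tower n n_gt0; have XspE := XspE M e n_gt0.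
split; first exact: (mul_e_inj tower n_gt0).
split.
  move=> x Mx; have [Mp eq_p] := pushdownP tower n_gt0 Mx.
  by do 2!split=> //; move=> y My eq_y; apply: (pushdown_unique tower n_gt0).
split; first exact: (trace_mul_e tower n_gt0).
split; first exact: (e_M_e tower n_gt0).
split.
  split; first by move=> x /XspE; apply: (X_sub_M tower n_gt0).
  split; last exact: (central_support tower n_gt0).
  move=> x m /XspE Xx Mm; split; apply/XspE.
    exact: (X_mull tower n_gt0 Mm).
  exact: (X_mulr tower n_gt0 Mm).
split; first exact: (basic_construction_iso tower n_gt0).
split; first by move=> y x; apply: (Ysp_mul_Xsp tower n_gt0).
split; first by move=> y; apply: (E_Ysp tower n_gt0).
exact: (Ysp_eq0_ge tower n_gt0).
Qed.
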